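(* Assume Assumption A holds. Then $\mathcal{M}'=\mathcal{M}$, where $\mathcal{M}'$ is the set of $\mu\in\mathcal{M}$ such that for every $(s,t)\in S\times T$, $\sum_{s'\in S}\mu(s'\mid t)\,p(s\mid s')=\sum_{t'\in T}\mu(s\mid t')\,p(t'\mid t)$.
   Context: $S$ is a finite set and $T$ is a copy of $S$. $p(\cdot\mid\cdot)$ is the transition function of an irreducible aperiodic Markov chain on $S$ with invariant measure $m$ (full support). Assumption A: there exist nonnegative numbers $\alpha_s$, $s\in S$, with $\sum_{s\in S\setminus\{\bar s\}}\alpha_s\le1$ for every $\bar s\in S$, such that $p(s'\mid s)=\alpha_{s'}$ whenever $s'\neq s$. $\mathcal{M}$ is the set of probability distributions $\mu$ on $S\times T$ both of whose marginals equal $m$, and $\mu(s\mid t)=\mu(s,t)/m(t)$. *)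

From HB Require Import structures.
From mathcomp Require Import all_boot all_order all_algebra.
Set Implicit Arguments. Unset Strict Implicit. Unset Printing Implicit Defensive.
Import Order.TTheory GRing.Theory Num.Theory.
Local Open Scope ring_scope.

(* Convention: P s s' = p(s' | s), the probability of moving from s to s'. *)

Definition is_stochastic (R : realFieldType) (S : finType) (P : S -> S -> R) : Prop :=
  (forall s s', 0 <= P s s') /\ (forall s, \sum_(s' : S) P s s' = 1).

Fixpoint nstep (R : realFieldType) (S : finType) (P : S -> S -> R) (n : nat)
  (s s' : S) : R :=
  match n with
  | O => (s == s')%:R
  | k.+1 => \sum_(u : S) nstep P k s u * P u s'
  end.

Definition mc_irreducible (R : realFieldType) (S : finType) (P : S -> S -> R) : Prop :=
  forall s s' : S, exists n : nat, 0 < nstep P n s s'.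

(* every state has period 1: gcd of return times {n >= 1 : p^(n)(s|s) > 0} is 1 *)
Definition mc_aperiodic (R : realFieldType) (S : finType) (P : S -> S -> R) : Prop :=
  forall (s : S) (d : nat),
    (forall n : nat, (0 < n)%N -> 0 < nstep P n s s -> (d %| n)%N) -> d = 1%N.

Definition mc_invariant (R : realFieldType) (S : finType) (P : S -> S -> R)
  (m : S -> R) : Prop :=
  forall s : S, m s = \sum_(s' : S) m s' * P s' s.

Definition full_support (R : realFieldType) (S : finType) (m : S -> R) : Prop :=
  forall s : S, 0 < m s.

Definition assumptionA (R : realFieldType) (S : finType) (P : S -> S -> R) : Prop :=
  exists alpha : S -> R,
    (forall s, 0 <= alpha s) /\
    (forall sbar : S, \sum_(s : S | s != sbar) alpha s <= 1) /\
    (forall s s' : S, s' != s -> P s s' = alpha s').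

(* The set M: probability distributions mu on S x T (T a copy of S) with
   both marginals equal to m.  mu s t = mu(s,t). *)
Definition inM (R : realFieldType) (S : finType) (m : S -> R) (mu : S -> S -> R)
  : Prop :=
  (forall s t, 0 <= mu s t) /\
  (\sum_(s : S) \sum_(t : S) mu s t = 1) /\
  (forall s, \sum_(t : S) mu s t = m s) /\
  (forall t, \sum_(s : S) mu s t = m t).

Definition condM (R : realFieldType) (S : finType) (m : S -> R) (mu : S -> S -> R)
  (s t : S) : R := mu s t / m t.

Definition inM' (R : realFieldType) (S : finType) (P : S -> S -> R) (m : S -> R)
  (mu : S -> S -> R) : Prop :=
  inM m mu /\
  forall s t : S,
    \sum_(s' : S) condM m mu s' t * P s' s
    = \sum_(t' : S) condM m mu s t' * P t t'.

From HB Require Import structures.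
From mathcomp Require Import all_boot all_order all_algebra.
From mathcomp Require Import ring.
Set Implicit Arguments. Unset Strict Implicit. Unset Printing Implicit Defensive.
Import Order.TTheory GRing.Theory Num.Theory.
Local Open Scope ring_scope.

(* Under Assumption A the chain stays put with probability [b = 1 - sum alpha]
   and otherwise jumps to a fresh state drawn from [alpha]:
   [p(y | x) = alpha y + b [x = y]].  Invariance of [m] then forces
   [alpha = (1 - b) m], and both sides of the defining equation of M' reduce
   to [(1 - b) m(s) + b mu(s | t)] by the marginal constraints on mu alone. *)

Lemma sum_mulr_nat_eq (R : pzSemiRingType) (S : finType) (F : S -> R) (y : S) :
  \sum_x F x * (x == y)%:R = F y.
Proof.
rewrite (bigD1 y) //= eqxx mulr1 big1 ?addr0 // => x /negbTE ->.
by rewrite mulr0.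
Qed.

Lemma assumptionA_kernel (R : realFieldType) (S : finType) (P : S -> S -> R)
    (alpha : S -> R) :
  (forall s, \sum_s' P s s' = 1) ->
  (forall s s', s' != s -> P s s' = alpha s') ->
  forall x y, P x y = alpha y + (x == y)%:R * (1 - \sum_u alpha u).
Proof.
move=> P1 Poff x y; have [<-|nxy] := eqVneq x y; last first.
  by rewrite mul0r addr0 Poff // eq_sym.
have off_x : \sum_(u | u != x) P x u = \sum_(u | u != x) alpha u.
  by apply: eq_bigr => u; apply: Poff.
have := P1 x; rewrite (bigD1 x) //= off_x => Px.
by rewrite mul1r (bigD1 x (F := alpha)) //= -Px; ring.
Qed.

Lemma inM_sum_marginal (R : realFieldType) (S : finType) (m : S -> R)
    (mu : S -> S -> R) :
  inM m mu -> \sum_s m s = 1.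
Proof.
by case=> _ [mu1 [mu_row _]]; rewrite -mu1; apply: eq_bigr => s _; rewrite mu_row.
Qed.

Section JumpKernel.

Variables (R : realFieldType) (S : finType) (P : S -> S -> R).
Variables (alpha : S -> R) (b : R).
Hypothesis P_jump : forall x y, P x y = alpha y + (x == y)%:R * b.

Lemma sum_mulr_jump_l (f : S -> R) (y : S) :
  \sum_x f x * P x y = (\sum_x f x) * alpha y + f y * b.
Proof.
under eq_bigr => x _ do rewrite P_jump mulrDr mulrA.
by rewrite big_split /= -!big_distrl /= sum_mulr_nat_eq.
Qed.

Lemma sum_mulr_jump_r (f : S -> R) (x : S) :
  \sum_y f y * P x y = \sum_y f y * alpha y + f x * b.
Proof.
under eq_bigr => y _ do rewrite P_jump eq_sym mulrDr mulrA.
by rewrite big_split /= -big_distrl /= sum_mulr_nat_eq.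
Qed.

Lemma invariant_jump (m : S -> R) :
  mc_invariant P m -> \sum_s m s = 1 -> forall t, alpha t = (1 - b) * m t.
Proof.
move=> m_inv m1 t; have := m_inv t.
rewrite sum_mulr_jump_l m1 mul1r => mt.
by rewrite -[alpha t](addrK (m t * b)) -mt; ring.
Qed.

Lemma jump_balance (m : S -> R) (mu : S -> S -> R) :
  full_support m -> inM m mu -> (forall t, alpha t = (1 - b) * m t) ->
  forall s t, \sum_s' condM m mu s' t * P s' s
              = \sum_t' condM m mu s t' * P t t'.
Proof.
move=> m_pos [_ [_ [mu_row mu_col]]] alpha_m s t.
have m_neq0 t' : m t' != 0 by rewrite gt_eqF.
rewrite sum_mulr_jump_l sum_mulr_jump_r; congr (_ + _).
rewrite /condM -big_distrl /= mu_col divff // mul1r.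
under eq_bigr => t' _ do rewrite alpha_m mulrCA divfK //.
by rewrite -mulr_sumr mu_row alpha_m.
Qed.

End JumpKernel.

Theorem lemma6 (R : realFieldType) (S : finType) (P : S -> S -> R) (m : S -> R) :
  is_stochastic P -> mc_irreducible P -> mc_aperiodic P ->
  mc_invariant P m -> full_support m ->
  assumptionA P ->
  forall mu : S -> S -> R, inM' P m mu <-> inM m mu.
Proof.
move=> [_ P1] _ _ m_inv m_pos [alpha [_ [_ Poff]]] mu.
split=> [[] // | mu_M]; split=> //.
have P_jump := assumptionA_kernel P1 Poff.
have alpha_m := invariant_jump P_jump m_inv (inM_sum_marginal mu_M).
exact: (jump_balance P_jump m_pos mu_M alpha_m).
Qed.
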